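(* Consider Algorithm MWHVC (described in the context) run on a hypergraph $G=(V,E)$ of rank $f$ with nonnegative vertex weights $w$, with parameters $\varepsilon\in(0,1]$, $\beta=\varepsilon/(f+\varepsilon)$ and multiplier $\alpha>1$. For every vertex $v$, the number of $v$-stuck iterations is at most $\alpha/\beta$.
   Context: Let $G=(V,E)$ be a hypergraph: each hyperedge is a nonempty subset of $V$ of size at most $f$ (rank $f$). Vertices have nonnegative weights $w(v)$. For $v\in V$, $E(v)=\{e\in E: v\in e\}$; $\Delta=\max_v |E(v)|\ge 3$. A hyperedge $e$ is covered by $C\subseteq V$ if $e\cap C\neq\emptyset$. The computation is distributed in synchronous rounds on the bipartite network with node set $V\cup E$ and a link between $v$ and $e$ iff $v\in e$. Parameters: $\varepsilon\in(0,1]$, $\beta=\varepsilon/(f+\varepsilon)$, and a multiplier $\alpha>1$. Algorithm MWHVC: Initialize $C\gets\emptyset$ and $E'(v)\gets E(v)$ for every $v$. Iteration $0$: every hyperedge $e$ sets $\mathrm{deal}_0(e)=\beta\cdot\min_{v\in e} w(v)/|E(v)|$ and $\delta_0(e)=\mathrm{deal}_0(e)$. For $i=1,2,\dots$: (a) every vertex $v\notin C$ (not terminated) checks whether $\sum_{e\in E(v)}\delta_{i-1}(e)\ge(1-\beta)w(v)$; if so, $v$ joins $C$, tells every $e\in E'(v)$ that $e$ is covered, and terminates. (b) Every uncovered hyperedge that receives such a message becomes covered, informs all its vertices, and terminates. (c) Every vertex $v\notin C$ that is told $e$ is covered sets $E'(v)\gets E'(v)\setminus\{e\}$; if $E'(v)=\emptyset$,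 $v$ terminates without joining $C$. (d) Every vertex $v\notin C$ sends ''raise'' to all $e\in E'(v)$ if $\sum_{e\in E'(v)}\mathrm{deal}_{i-1}(e)\le(\beta/\alpha)w(v)$, and otherwise sends ''stuck'' to all $e\in E'(v)$. (e) Every uncovered hyperedge $e$ sets $\mathrm{deal}_i(e)=\mathrm{deal}_{i-1}(e)$ if it received some ''stuck'' message, and $\mathrm{deal}_i(e)=\alpha\cdot\mathrm{deal}_{i-1}(e)$ otherwise, and $\delta_i(e)=\delta_{i-1}(e)+\mathrm{deal}_i(e)$. An iteration $i$ is a $v$-stuck iteration if $v$ sends the message ''stuck'' in step (d) of iteration $i$. *)

From HB Require Import structures.
From mathcomp Require Import all_boot all_order all_algebra.
Set Implicit Arguments. Unset Strict Implicit. Unset Printing Implicit Defensive.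
Import Order.TTheory GRing.Theory Num.Theory.
Local Open Scope ring_scope.

Section MWHVC.
Variables (R : realFieldType) (V : finType) (E : {set {set V}}) (w : V -> R)
  (beta alpha : R).

Definition Ev (v : V) : {set {set V}} := [set e in E | v \in e].

(* Global state after a completed iteration. *)
Record state := State {
  sC : {set V};
  sT : {set V};                 (* terminated vertices (contains C) *)
  sCov : {set {set V}};
  sEp : V -> {set {set V}};
  sDeal : {set V} -> R;
  sDelta : {set V} -> R
}.

Definition deal0 (e : {set V}) : R :=
  let q v := w v / (#|Ev v|)%:R in
  match [pick v in e] with
  | Some v0 => beta * \big[Num.min/q v0]_(v in e) q v
  | None => 0
  end.

(* State after iteration 0. *)
Definition init : state := State set0 set0 set0 Ev deal0 deal0.

(* Iteration i, computed from the state s after iteration i-1. *)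
Definition joiners (s : state) : {set V} :=
  [set v | (v \notin sT s) && ((1 - beta) * w v <= \sum_(e in Ev v) sDelta s e)].
Definition newcov (s : state) : {set {set V}} :=
  [set e in E | (e \notin sCov s) && [exists v in joiners s, e \in sEp s v]].
Definition Ep' (s : state) (v : V) : {set {set V}} :=
  if (v \notin sT s) && (v \notin joiners s) then sEp s v :\: newcov s
  else sEp s v.
Definition informed (s : state) (v : V) : bool := [exists e in newcov s, v \in e].
Definition quitters (s : state) : {set V} :=
  [set v | [&& v \notin sT s, v \notin joiners s, informed s v & Ep' s v == set0]].
Definition T' (s : state) : {set V} := sT s :|: joiners s :|: quitters s.
Definition cov' (s : state) : {set {set V}} := sCov s :|: newcov s.
Definition sends_stuck (s : state) (v : V) : bool :=
  (v \notin T' s) && (beta / alpha * w v < \sum_(e in Ep' s v) sDeal s e).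
Definition gets_stuck (s : state) (e : {set V}) : bool :=
  [exists v, sends_stuck s v && (e \in Ep' s v)].
Definition deal' (s : state) (e : {set V}) : R :=
  if (e \in E) && (e \notin cov' s) then
    (if gets_stuck s e then sDeal s e else alpha * sDeal s e)
  else sDeal s e.
Definition delta' (s : state) (e : {set V}) : R :=
  if (e \in E) && (e \notin cov' s) then sDelta s e + deal' s e
  else sDelta s e.

Definition step (s : state) : state :=
  State (sC s :|: joiners s) (T' s) (cov' s) (Ep' s) (deal' s) (delta' s).

Definition stuck_iter (v : V) (i : nat) : bool :=
  (1 <= i)%N && sends_stuck (iter i.-1 step init) v.

End MWHVC.

(* The potential of a vertex v is the sum of delta(e) over the hyperedges e
   containing v.  It never decreases, and in a v-stuck iteration it grows by
   more than (beta/alpha) w(v), the total deal offered to v.  On the other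
   hand, v is still outside the cover at a stuck iteration, so the potential
   is then below (1 - beta) w(v).  Hence the k stuck iterations before the
   last one satisfy k (beta/alpha) w(v) < (1 - beta) w(v), which forces
   k + 1 <= alpha/beta. *)
From HB Require Import structures.
From mathcomp Require Import all_boot all_order all_algebra.
From mathcomp Require Import lra.
Set Implicit Arguments. Unset Strict Implicit.
Import Order.TTheory GRing.Theory Num.Theory.
Local Open Scope ring_scope.

Lemma stuck_count_bound (R : realFieldType) (k beta alpha x : R) :
  0 < beta -> 1 < alpha -> 0 <= x ->
  k * (beta / alpha * x) < (1 - beta) * x -> k + 1 <= alpha / beta.
Proof.
move=> beta_gt0 alpha_gt1 x_ge0 hlt.
have x_gt0 : 0 < x.
  by rewrite lt_def x_ge0 andbT; apply: contraTneq hlt => ->; rewrite !mulr0 ltxx.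
set q := beta / alpha in hlt.
have q_gt0 : 0 < q by rewrite divr_gt0 //; lra.
have beta_q : beta = q * alpha by rewrite divfK // gt_eqF //; lra.
have kq_lt : k * q < 1 - beta by rewrite -(ltr_pM2r x_gt0) -mulrA.
rewrite ler_pdivlMr // beta_q; nra.
Qed.

Section Potential.
Variables (R : realFieldType) (V : finType) (E : {set {set V}}) (w : V -> R)
  (beta alpha : R).
Hypotheses (w_ge0 : forall v, 0 <= w v) (beta_gt0 : 0 < beta)
  (alpha_gt1 : 1 < alpha).

Local Notation step := (step E w beta alpha).
Local Notation run n := (iter n step (init E w beta)).

Definition wf_state (s : state R V) :=
  [/\ forall e, 0 <= sDeal s e, forall e, 0 <= sDelta s e,
      forall u, sEp s u \subset Ev E u &
      forall u e, u \notin sT s -> e \in sEp s u -> e \notin sCov s].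

Lemma deal0_ge0 e : 0 <= deal0 E w beta e.
Proof.
rewrite /deal0; case: pickP => [v0 _|_] //.
apply: mulr_ge0; first exact: ltW.
apply: (big_ind (fun x => 0 <= x)) => [|x y x_ge0 y_ge0|u _].
- exact: divr_ge0.
- by rewrite le_min x_ge0.
- exact: divr_ge0.
Qed.

Lemma wf_init : wf_state (init E w beta).
Proof. by split=> //= [e|e|u e _]; rewrite ?deal0_ge0 ?inE.
Qed.

Lemma Ep'_uncovered s u e : wf_state s -> u \notin T' E w beta s ->
  e \in Ep' E w beta s u -> e \notin cov' E w beta s.
Proof.
case=> _ _ _ uncov.
rewrite /T' !in_setU !negb_or => /andP [/andP [uT uJ] _].
rewrite /Ep' uT uJ /= inE => /andP [e_new e_Ep].
by rewrite e_new (uncov _ _ uT e_Ep).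
Qed.

Lemma deal_le_step s e : wf_state s -> sDeal s e <= deal' E w beta alpha s e.
Proof.
case=> deal_ge0 _ _ _; rewrite /deal'; case: ifP => _ //; case: ifP => _ //.
by rewrite ler_peMl // ltW.
Qed.

Lemma delta_le_step s e : wf_state s -> sDelta s e <= delta' E w beta alpha s e.
Proof.
move=> wf_s; have [deal_ge0 _ _ _] := wf_s.
rewrite /delta'; case: ifP => _ //.
by rewrite lerDl (le_trans (deal_ge0 e)) ?deal_le_step.
Qed.

Lemma wf_step s : wf_state s -> wf_state (step s).
Proof.
move=> wf_s; have [deal_ge0 delta_ge0 Ep_sub _] := wf_s.
split=> /= [e|e|u|u e]; last exact: Ep'_uncovered.
- exact: le_trans (deal_ge0 e) (deal_le_step e wf_s).
- exact: le_trans (delta_ge0 e) (delta_le_step e wf_s).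
- rewrite /Ep'; case: ifP => _ //.
  exact: subset_trans (subsetDl _ _) (Ep_sub u).
Qed.

Lemma wf_run n : wf_state (run n).
Proof. by elim: n => [|n IH]; [exact: wf_init | exact: wf_step]. Qed.

Variable v : V.

Definition potential (s : state R V) := \sum_(e in Ev E v) sDelta s e.

Lemma potential_ge0 s : wf_state s -> 0 <= potential s.
Proof. by case=> _ delta_ge0 _ _; apply: sumr_ge0. Qed.

Lemma potential_le_step s : wf_state s -> potential s <= potential (step s).
Proof. by move=> wf_s; apply: ler_sum => e _; apply: delta_le_step. Qed.

(* Every hyperedge of E'(v) stays uncovered in the current iteration, so its
   delta grows by its new deal, which is at least its old one. *)
Lemma potential_step_ge s : wf_state s -> v \notin T' E w beta s ->
  potential s + \sum_(e in Ep' E w beta s v) sDeal s e <= potential (step s).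
Proof.
move=> wf_s vT; have [deal_ge0 _ Ep_sub _] := wf_s.
have Ep'_sub : Ep' E w beta s v \subset Ev E v.
  by rewrite /Ep'; case: ifP => _ //; exact: subset_trans (subsetDl _ _) (Ep_sub v).
have delta_ge e : e \in Ev E v -> sDelta s e +
    (if e \in Ep' E w beta s v then sDeal s e else 0) <= delta' E w beta alpha s e.
  move=> e_v; case: ifP => e_Ep; last by rewrite addr0 delta_le_step.
  have e_E : e \in E by move: e_v; rewrite inE => /andP [].
  by rewrite /delta' e_E (Ep'_uncovered wf_s vT e_Ep) lerD2l deal_le_step.
apply: le_trans (ler_sum _ delta_ge).
rewrite big_split /= lerD2l -big_mkcondr /=.
rewrite [X in _ <= X](eq_bigl (fun e => e \in Ep' E w beta s v)) // => e.
by apply/andb_idl => /(subsetP Ep'_sub).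
Qed.

Lemma potential_stuck_step s : wf_state s -> sends_stuck E w beta alpha s v ->
  potential s + beta / alpha * w v <= potential (step s).
Proof.
move=> wf_s /andP [vT deal_gt].
by apply: le_trans (potential_step_ge wf_s vT); rewrite lerD2l ltW.
Qed.

Lemma potential_stuck_lt s : sends_stuck E w beta alpha s v ->
  potential s < (1 - beta) * w v.
Proof.
rewrite /sends_stuck /T' !in_setU !negb_or => /andP [/andP [/andP [vT vJ] _] _].
by move: vJ; rewrite inE vT /= -ltNge.
Qed.

Definition stuck_count n :=
  count (fun j => sends_stuck E w beta alpha (run j) v) (iota 0 n).

Lemma stuck_countS n :
  stuck_count n.+1 = (stuck_count n + sends_stuck E w beta alpha (run n) v)%N.
Proof. by rewrite /stuck_count -addn1 iotaD count_cat /= addn0. Qed.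

Lemma stuck_count_potential n :
  (stuck_count n)%:R * (beta / alpha * w v) <= potential (run n).
Proof.
elim: n => [|n IH]; first by rewrite /stuck_count /= mul0r (potential_ge0 wf_init).
rewrite stuck_countS iterS; case stuck_n: (sends_stuck _ _ _ _ _ _).
- rewrite natrD mulrDl mul1r.
  by apply: le_trans (potential_stuck_step (wf_run n) stuck_n); rewrite lerD2r.
- by rewrite addn0 (le_trans IH) // (potential_le_step (wf_run n)).
Qed.

Lemma stuck_count_le n : (stuck_count n)%:R <= alpha / beta.
Proof.
elim: n => [|n IH].
  by rewrite /stuck_count /= divr_ge0 ?ltW //; exact: lt_trans ltr01 alpha_gt1.
rewrite stuck_countS; case stuck_n: (sends_stuck _ _ _ _ _ _); last by rewrite addn0.
rewrite natrD; apply: (stuck_count_bound (x := w v)) => //.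
exact: le_lt_trans (stuck_count_potential n) (potential_stuck_lt stuck_n).
Qed.

End Potential.

Theorem mainTheorem5 (R : realFieldType) (V : finType) (E : {set {set V}})
  (f : nat) (w : V -> R) (eps alpha : R)
  (hE0 : set0 \notin E)
  (hrank : forall e, e \in E -> (#|e| <= f)%N)
  (hDelta : (3 <= \max_(v : V) #|Ev E v|)%N)
  (hw : forall v, 0 <= w v)
  (heps : 0 < eps) (heps1 : eps <= 1) (halpha : 1 < alpha) :
  let beta := eps / (f%:R + eps) in
  forall (v : V) (n : nat),
    (count (stuck_iter E w beta alpha v) (iota 1 n))%:R <= alpha / beta.
Proof.
move=> beta v n.
have beta_gt0 : 0 < beta by rewrite divr_gt0 // ltr_wpDl.
suff -> : count (stuck_iter E w beta alpha v) (iota 1 n)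
          = stuck_count E w beta alpha v n by exact: stuck_count_le.
by rewrite -[iota 1 n]/(iota (1 + 0) n) iotaDl count_map.
Qed.
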